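(* Fix a ROMDP satisfying Assumptions 1 and 2 below, a deterministic observation-based policy $\pi$, and an action $l\in[A]$. Let $M_2^{(l)}=U\Sigma U^{\mathsf T}$ be an eigendecomposition of the second moment $M_2^{(l)}$. If all nonzero eigenvalues of $M_2^{(l)}$ have multiplicity 1, then there exist a mapping $\sigma^{(l)}:\mathcal X\to\mathcal X$ and multiplicative constants $\{C_i^{(l)}\}_{i\in[X]}$ such that for every $i\in\mathcal X_\pi^{(l)}$ and $j\in[Y]$, $[V_2^{(l)}]_{j,\sigma^{(l)}(i)}=C_i^{(l)}[U]_{j,i}$ (indexing the eigenvectors of nonzero eigenvalues by $i\in\mathcal X_\pi^{(l)}$). Consequently, defining for each $i\in\mathcal X_\pi^{(l)}$ the cluster $\widetilde{\mathcal Y}_i^{(l)}=\{j\in[Y]:[U]_{j,i}>0\}$, if $j,j'\in\widetilde{\mathcal Y}_i^{(l)}$ then $j,j'\in\mathcal Y_{\sigma^{(l)}(i)}$.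
   Context: A rich-observation MDP (ROMDP) consists of finite sets of hidden states $\mathcal X=[X]$, observations $\mathcal Y=[Y]$, actions $\mathcal A=[A]$ with $X\le Y$; transitions $T_{i',i,l}=\mathbb P(x'=i'\mid x=i,a=l)$; observation matrix $O_{j,i}=\mathbb P(y=j\mid x=i)$ with each observation $j$ having exactly one hidden state with $O_{j,i}>0$, and $\mathcal Y_i=\{j:O_{j,i}>0\}$; rewards depending on hidden state and action. Policies are deterministic maps $\pi:\mathcal Y\to\mathcal A$. Assumption 1: every such $\pi$ induces an ergodic Markov chain on hidden states. Assumption 2: each $T_{\cdot,\cdot,l}$ is full rank. For policy $\pi$: $\omega_\pi^{(l)}(i)=\mathbb P_\pi(x=i\mid a=l)$ under stationarity; $\mathcal X_\pi^{(l)}=\{i:\omega_\pi^{(l)}(i)>0\}$; with $\vec v_1,\vec v_2,\vec v_3\in\{0,1\}^Y$ the one-hot encodings of three consecutive observations $y_{t-1},y_t,y_{t+1}$ of the stationary process and $x_2,a_2$ the hidden state and action at time $t$, $[V_p^{(l)}]_{j,i}=\mathbb P(\vec v_p=e_j\mid x_2=i,a_2=l)$, in particular $V_2^{(l)}$ has columns indexed by $i\in\mathcal X_\pi^{(l)}$. $K_{p,q}^{(l)}=\mathbb E[\vec v_p\otimes\vec v_q\mid a_2=l]$; symmetrized views $\tilde v_1=K_{2,3}^{(l)}(K_{1,3}^{(l)})^\dagger\vec v_1$, $\tilde v_3=K_{2,1}^{(l)}(K_{3,1}^{(l)})^\dagger\vec v_3$; $M_2^{(l)}=\mathbb E[\tilde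 v_1\otimes\tilde v_3\mid a_2=l]=\sum_{i\in\mathcal X_\pi^{(l)}}\omega_\pi^{(l)}(i)[V_2^{(l)}]_{:,i}\otimes[V_2^{(l)}]_{:,i}$. *)

From mathcomp Require Import all_boot all_order all_algebra.
Set Implicit Arguments. Unset Strict Implicit. Unset Printing Implicit Defensive.
Import Order.TTheory GRing.Theory Num.Theory.
Local Open Scope ring_scope.

(* Hidden states 'I_X, observations 'I_Y, actions 'I_A.
   Transitions: (T l) i' i = P(x' = i' | x = i, a = l).
   Observations: O j i = P(y = j | x = i).
   Rewards do not enter the statement and are omitted. *)

Definition col_stochastic (R : numDomainType) (m n : nat) (M : 'M[R]_(m, n)) :=
  (forall i j, 0 <= M i j) /\ (forall j, \sum_i M i j = 1).

Definition is_ROMDP (R : numDomainType) (X Y A : nat)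
    (T : 'I_A -> 'M[R]_X) (O : 'M[R]_(Y, X)) : Prop :=
  [/\ (X <= Y)%N,
      (forall l, col_stochastic (T l)),
      col_stochastic O
    & (forall j : 'I_Y, exists! i : 'I_X, 0 < O j i)].

(* Markov chain on hidden states induced by a deterministic policy
   pi : observations -> actions :  P(x' = i' | x = i). *)
Definition chain (R : numDomainType) (X Y A : nat)
    (T : 'I_A -> 'M[R]_X) (O : 'M[R]_(Y, X)) (pi : 'I_Y -> 'I_A) : 'M[R]_X :=
  \matrix_(i', i) \sum_j O j i * T (pi j) i' i.

(* A finite Markov chain (column-stochastic P) is ergodic: irreducible and
   aperiodic, i.e. some power of P has all entries positive. *)
Definition ergodic (R : numDomainType) (X : nat) (P : 'M[R]_X) : Prop :=
  exists n : nat, forall i' i, 0 < (iter n (mulmx P) 1%:M) i' i.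

Definition Assumption1 (R : numDomainType) (X Y A : nat)
    (T : 'I_A -> 'M[R]_X) (O : 'M[R]_(Y, X)) : Prop :=
  forall pi : 'I_Y -> 'I_A, ergodic (chain T O pi).

Definition Assumption2 (R : numFieldType) (X A : nat) (T : 'I_A -> 'M[R]_X) : Prop :=
  forall l, \rank (T l) = X.

Definition stationary (R : numDomainType) (X : nat) (P : 'M[R]_X) (rho : 'I_X -> R) : Prop :=
  [/\ forall i, 0 <= rho i, \sum_i rho i = 1
    & forall i', \sum_i P i' i * rho i = rho i'].

(* P(a = l | x = i) *)
Definition act_given_state (R : numDomainType) (X Y A : nat)
    (O : 'M[R]_(Y, X)) (pi : 'I_Y -> 'I_A) (l : 'I_A) (i : 'I_X) : R :=
  \sum_(j | pi j == l) O j i.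

(* P(a = l) under stationarity *)
Definition prob_action (R : numDomainType) (X Y A : nat)
    (O : 'M[R]_(Y, X)) (pi : 'I_Y -> 'I_A) (rho : 'I_X -> R) (l : 'I_A) : R :=
  \sum_i rho i * act_given_state O pi l i.

(* omega_pi^(l)(i) = P(x = i | a = l) under stationarity *)
Definition omega (R : numFieldType) (X Y A : nat)
    (O : 'M[R]_(Y, X)) (pi : 'I_Y -> 'I_A) (rho : 'I_X -> R) (l : 'I_A) (i : 'I_X) : R :=
  rho i * act_given_state O pi l i / prob_action O pi rho l.

Definition in_Xpi (R : numFieldType) (X Y A : nat)
    (O : 'M[R]_(Y, X)) (pi : 'I_Y -> 'I_A) (rho : 'I_X -> R) (l : 'I_A) (i : 'I_X) : bool :=
  0 < omega O pi rho l i.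

(* [V_2^(l)]_{j,i} = P(y_t = j | x_t = i, a_t = l)  (meaningful for i in X_pi^(l)) *)
Definition V2 (R : numFieldType) (X Y A : nat)
    (O : 'M[R]_(Y, X)) (pi : 'I_Y -> 'I_A) (l : 'I_A) : 'M[R]_(Y, X) :=
  \matrix_(j, i) (O j i * (pi j == l)%:R / act_given_state O pi l i).

Definition M2 (R : numFieldType) (X Y A : nat)
    (O : 'M[R]_(Y, X)) (pi : 'I_Y -> 'I_A) (rho : 'I_X -> R) (l : 'I_A) : 'M[R]_Y :=
  \sum_(i | in_Xpi O pi rho l i)
     omega O pi rho l i *: (col i (V2 O pi l) *m (col i (V2 O pi l))^T).

From mathcomp Require Import all_boot all_order all_algebra.
Import Order.TTheory GRing.Theory Num.Theory.
Local Open Scope ring_scope.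
Set Implicit Arguments. Unset Strict Implicit.

(** Each observation is emitted by a single hidden state, so the columns of
   [V2] have disjoint supports; hence they are pairwise orthogonal and each of
   them is an eigenvector of [M2 = \sum_i omega_i v_i v_i^T].  In the basis
   [U] an eigenvector of [M2 = U diag(d) U^T] can only have nonzero
   coordinates along one eigenvalue, so a nonzero coordinate [k] with [d k]
   simple and nonzero makes it a multiple of [U[:,k]].  Such a column exists
   because [d k = (U^T M2 U)_kk = \sum_i omega_i ((U^T v_i)_k)^2]. *)

Section OrthogonalOuterSum.
Variables (R : comPzRingType) (n m : nat).
Variables (P : pred 'I_m) (w : 'I_m -> R) (v : 'I_m -> 'cV[R]_n).

Let M := \sum_(i | P i) w i *: (v i *m (v i)^T).

Lemma outer_sum_mul_orthogonal i :
    (forall i i', i != i' -> (v i)^T *m v i' = 0) -> P i ->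
  M *m v i = (w i * ((v i)^T *m v i) 0 0) *: v i.
Proof.
move=> orth Pi; rewrite mulmx_suml (bigD1 i) //= big1 => [|i' /andP[_ ni'i]].
  rewrite addr0 -scalemxAl -mulmxA {1}[(v i)^T *m v i]mx11_scalar.
  by rewrite mul_mx_scalar scalerA.
by rewrite -scalemxAl -mulmxA orth ?mulmx0 ?scaler0.
Qed.

Lemma outer_sum_coord_neq0 (n' : nat) (B : 'M[R]_(n', n)) k :
    (B *m M *m B^T) k k != 0 -> exists2 i, P i & (B *m v i) k 0 != 0.
Proof.
move=> Mkk; suff /existsP[i /andP[Pi Bvk]] : [exists i, P i && ((B *m v i) k 0 != 0)].
  by exists i.
apply: contraNT Mkk => /existsPn-none; apply/eqP.
rewrite mulmx_sumr mulmx_suml summxE big1 // => i Pi.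
set y := B *m v i; have y0 : y k 0 = 0 by apply/eqP; have := none i; rewrite Pi negbK.
have -> : B *m (w i *: (v i *m (v i)^T)) *m B^T = w i *: (y *m y^T).
  by rewrite /y trmx_mul -scalemxAr -scalemxAl !mulmxA.
by rewrite mxE [(y *m _) _ _]mxE big_ord1 [y^T _ _]mxE [ord0]ord1 y0 mul0r mulr0.
Qed.

End OrthogonalOuterSum.

Section SimpleSpectrum.
Variables (R : fieldType) (n : nat) (U : 'M[R]_n) (d : 'I_n -> R).
Hypothesis UtU : U^T *m U = 1%:M.
Hypothesis d_simple : forall k k', d k != 0 -> d k = d k' -> k = k'.

Let D := diag_mx (\row_k d k).

Lemma eigenvector_col_simple (v : 'cV[R]_n) lam k :
    (U *m D *m U^T) *m v = lam *: v -> d k != 0 -> (U^T *m v) k 0 != 0 ->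
  v = (U^T *m v) k 0 *: col k U.
Proof.
move=> eig dk vk; set y := U^T *m v.
have Dy : D *m y = lam *: y.
  have -> : D *m y = U^T *m ((U *m D *m U^T) *m v) by rewrite !mulmxA UtU mul1mx.
  by rewrite eig scalemxAr.
have dy k' : d k' * y k' 0 = lam * y k' 0.
  by have := congr1 (fun z : 'cV_n => z k' 0) Dy; rewrite /D mul_diag_mx !mxE.
have dk_lam : d k = lam by apply: (mulIf vk); rewrite dy.
have y0 k' : k' != k -> y k' 0 = 0.
  move=> k'k; apply/eqP; apply: contraNT k'k => yk'; apply/eqP/esym.
  by apply: d_simple dk _; apply: (mulIf yk'); rewrite dy dk_lam.
have -> : v = U *m y by rewrite mulmxA (mulmx1C UtU) mul1mx.
clearbody y; apply/matrixP => j z; rewrite ord1 !mxE (bigD1 k) //= big1 ?addr0.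
  by rewrite mulrC.
by move=> k' k'k; rewrite y0 ?mulr0.
Qed.

Lemma orthogonal_outer_sum_simple_eigencol m (P : pred 'I_m) (w : 'I_m -> R)
    (v : 'I_m -> 'cV[R]_n) k :
    (forall i i', i != i' -> (v i)^T *m v i' = 0) ->
    \sum_(i | P i) w i *: (v i *m (v i)^T) = U *m D *m U^T -> d k != 0 ->
  exists i c, [/\ P i, c != 0 & v i = c *: col k U].
Proof.
move=> orth Mdiag dk.
have Dkk : (U^T *m (U *m D *m U^T) *m U^T^T) k k = d k.
  by rewrite trmxK !mulmxA UtU mul1mx -mulmxA UtU mulmx1 !mxE eqxx mulr1n.
have [|i Pi vk] := @outer_sum_coord_neq0 _ _ _ P w v _ U^T k; first by rewrite Mdiag Dkk.
exists i, ((U^T *m v i) k 0); split=> //.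
apply: (eigenvector_col_simple (lam := w i * ((v i)^T *m v i) 0 0)) => //.
by rewrite -Mdiag outer_sum_mul_orthogonal.
Qed.

End SimpleSpectrum.

Lemma col_orthogonal_disjoint_support (R : pzSemiRingType) (p q : nat)
    (M : 'M[R]_(p, q)) i i' :
  (forall j, M j i * M j i' = 0) -> (col i M)^T *m col i' M = 0.
Proof. by move=> disj; apply/matrixP => a b; rewrite !mxE big1 // => j _; rewrite !mxE. Qed.

Section ObservationColumns.
Variables (R : realFieldType) (X Y A : nat).
Variables (O : 'M[R]_(Y, X)) (pi : 'I_Y -> 'I_A) (l : 'I_A).
Hypothesis O_ge0 : forall j i, 0 <= O j i.
Hypothesis O_single : forall j : 'I_Y, exists! i : 'I_X, 0 < O j i.

Lemma V2_neq0_O_gt0 j i : V2 O pi l j i != 0 -> 0 < O j i.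
Proof.
rewrite lt_def O_ge0 andbT; apply: contraNneq => O0.
by rewrite mxE O0 !mul0r.
Qed.

Lemma V2_col_orthogonal i i' :
  i != i' -> (col i (V2 O pi l))^T *m col i' (V2 O pi l) = 0.
Proof.
move=> ii'; apply: col_orthogonal_disjoint_support => j.
have [->|/V2_neq0_O_gt0 Oi] := eqVneq (V2 O pi l j i) 0; first by rewrite mul0r.
have [->|/V2_neq0_O_gt0 Oi'] := eqVneq (V2 O pi l j i') 0; first by rewrite mulr0.
have [s [_ uniq_s]] := O_single j.
by move: ii'; rewrite -(uniq_s _ Oi) -(uniq_s _ Oi') eqxx.
Qed.

End ObservationColumns.

Theorem lemma9 (R : realFieldType) (X Y A : nat)
    (T : 'I_A -> 'M[R]_X) (O : 'M[R]_(Y, X)) (pi : 'I_Y -> 'I_A)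
    (rho : 'I_X -> R) (l : 'I_A)
    (U : 'M[R]_Y) (d : 'I_Y -> R) (idx : 'I_X -> 'I_Y) :
  is_ROMDP T O ->
  Assumption1 T O ->
  Assumption2 T ->
  stationary (chain T O pi) rho ->
  (* eigendecomposition M2 = U Sigma U^T, U orthogonal, Sigma = diag d *)
  U^T *m U = 1%:M ->
  M2 O pi rho l = U *m diag_mx (\row_k d k) *m U^T ->
  (* all nonzero eigenvalues have multiplicity 1 *)
  (forall k k', d k != 0 -> d k = d k' -> k = k') ->
  (* the eigenvectors of nonzero eigenvalues are indexed by i in X_pi^(l) via idx *)
  (forall i i', in_Xpi O pi rho l i -> in_Xpi O pi rho l i' -> idx i = idx i' -> i = i') ->
  (forall k, d k != 0 <-> exists i, in_Xpi O pi rho l i /\ idx i = k) ->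
  exists (sigma : 'I_X -> 'I_X) (C : 'I_X -> R),
    (forall i, in_Xpi O pi rho l i ->
       [/\ in_Xpi O pi rho l (sigma i), C i != 0
         & forall j, V2 O pi l j (sigma i) = C i * U j (idx i)]) /\
    (forall i, in_Xpi O pi rho l i ->
       forall j j', 0 < U j (idx i) -> 0 < U j' (idx i) ->
         0 < O j (sigma i) /\ 0 < O j' (sigma i)).
Proof.
move=> [_ _ [O_ge0 _] O_single] _ _ _ UtU M2E d_simple _ d_idx.
set P := in_Xpi O pi rho l; set V := V2 O pi l.
have eigencol i : exists sc : 'I_X * R, P i ->
    [/\ P sc.1, sc.2 != 0 & forall j, V j sc.1 = sc.2 * U j (idx i)].
  have [Pi|] := boolP (P i); last by exists (i, 0) => /negP.
  have dk : d (idx i) != 0 by apply/d_idx; exists i.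
  have [s [c [Ps c0 Vs]]] := orthogonal_outer_sum_simple_eigencol UtU d_simple
    (V2_col_orthogonal pi l O_ge0 O_single) M2E dk.
  exists (s, c) => _; split=> // j.
  by have := congr1 (fun z : 'cV_Y => z j 0) Vs; rewrite !mxE.
have [sc sc_spec] := fin_all_exists eigencol.
exists (fun i => (sc i).1), (fun i => (sc i).2); split=> // i Pi.
have [_ c0 Vs] := sc_spec i Pi.
have O_gt0 j : 0 < U j (idx i) -> 0 < O j (sc i).1.
  move=> Uj; apply: (V2_neq0_O_gt0 (pi := pi) (l := l) O_ge0).
  by rewrite [X in X != 0]Vs mulf_neq0 // lt0r_neq0.
by move=> j j' /O_gt0 Oj /O_gt0 Oj'.
Qed.
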